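(* Let $\alpha,q\in(-1,1)$ and $x\in H$. Then $b_{\alpha,q}(x)=r_q(x)+\alpha\,\ell_q(\bar x)\,q^{N-1}$, i.e. for every $n\ge1$ and $f\in H^{\otimes n}$, $b_{\alpha,q}(x)f=r_q(x)f+\alpha q^{n-1}\ell_q(\bar x)f$ (with $0^0=1$), where $$r_q(x)(x_1\otimes\cdots\otimes x_n)=\sum_{k=1}^n q^{n-k}\langle x,x_k\rangle\,x_1\otimes\cdots\otimes\check x_k\otimes\cdots\otimes x_n,$$ $$\ell_q(x)(x_1\otimes\cdots\otimes x_n)=\sum_{k=1}^n q^{k-1}\langle x,x_k\rangle\,x_1\otimes\cdots\otimes\check x_k\otimes\cdots\otimes x_n,$$ $\check x_k$ denoting omission of the factor $x_k$ (for $n=1$ the result is a multiple of $\Omega$).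
   Context: Let $H_\mathbb{R}$ be a real separable Hilbert space and $H$ its complexification, with inner product $\langle\cdot,\cdot\rangle$ linear in the second and antilinear in the first argument. Fix a self-adjoint involution $x\mapsto\bar x$ on $H$ (linear, $\bar{\bar x}=x$, $\langle\bar x,y\rangle=\langle x,\bar y\rangle$). Let $\Sigma(n)$ be the group of bijections $\sigma$ of $\{\pm1,\dots,\pm n\}$ with $\sigma(-k)=-\sigma(k)$, generated by $\pi_0=(1,-1)$ and $\pi_i=(i,i+1)$, $1\le i\le n-1$; for $\sigma$ written as a reduced word, $l_1(\sigma)$ is the number of occurrences of $\pi_0$ and $l_2(\sigma)$ the number of occurrences of $\pi_i$, $i\ge1$. $\Sigma(n)$ acts on $H^{\otimes n}$ by $\pi_i$ swapping the $i$-th and $(i+1)$-th factors and $\pi_0(x_1\otimes\cdots\otimes x_n)=\overline{x_1}\otimes x_2\otimes\cdots\otimes x_n$. Set $P^{(n)}_{\alpha,q}=\sum_{\sigma\in\Sigma(n)}\alpha^{l_1(\sigma)}q^{l_2(\sigma)}\sigma$ ($n\ge1$, $0^0=1$), $P^{(0)}_{\alpha,q}=\mathrm{id}$. Let $\mathcal F=\bigoplus_{n\ge0}H^{\otimes n}$ be the algebraic full Fock space, $H^{\otimes0}=\mathbb{C}\Omega$, with $\langle x_1\otimes\cdots\otimes x_m,y_1\otimes\cdots\otimes y_n\rangle_{0,0}=\delta_{m,n}\prod_i\langle x_i,y_i\rangle$ and $\langle f,g\rangle_{\alpha,q}=\langle f,P_{\alpha,q}g\rangle_{0,0}$, $P_{\alpha,q}=\bigoplus_nP^{(n)}_{\alpha,q}$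 (an inner product for $\alpha,q\in(-1,1)$). $N$ is the number operator, $Nf=nf$ for $f\in H^{\otimes n}$. The right creation operator is $r^*(x)(x_1\otimes\cdots\otimes x_n)=x_1\otimes\cdots\otimes x_n\otimes x$, $r^*(x)\Omega=x$. The $(\alpha,q)$-creation operator is $b^*_{\alpha,q}(x):=r^*(x)$ and $b_{\alpha,q}(x)$ is its adjoint with respect to $\langle\cdot,\cdot\rangle_{\alpha,q}$. *)

From HB Require Import structures.
From mathcomp Require Import all_boot all_order all_algebra all_fingroup.
From mathcomp Require Import complex.
From Stdlib Require Import ClassicalEpsilon.
Set Implicit Arguments. Unset Strict Implicit. Unset Printing Implicit Defensive.
Import Order.TTheory GRing.Theory Num.Theory.
Local Open Scope ring_scope.

(* The points +-1,...,+-n are encoded as pairs (k, b) : 'I_n * bool, where  *)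
(* k = j-1 is the (0-based) index of the point +-j and b = true means "-".   *)

Definition sflip (T : Type) (z : T * bool) : T * bool := (z.1, ~~ z.2).

Definition signedb (n : nat) (s : {perm 'I_n * bool}) : bool :=
  [forall z : 'I_n * bool, s (sflip z) == sflip (s z)].

Definition Sigma (n : nat) : seq {perm 'I_n * bool} :=
  [seq s <- enum {: {perm 'I_n * bool}} | signedb s].

(*   generator 0     = pi_0 = (1,-1)        : flips the sign of point index 0 *)
(*   generator i>=1  = pi_i = (i,i+1)       : swaps point indices i-1 and i   *)
Definition swapn (i j k : nat) : nat :=
  if k == i then j else if k == j then i else k.

Definition gen_pt (g : nat) (z : nat * bool) : nat * bool :=
  if g == 0%N then (if z.1 == 0%N then (z.1, ~~ z.2) else z)
  else (swapn g.-1 g z.1, z.2).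

(* A word [:: g1; ...; gk] denotes the product g1 g2 ... gk (composition). *)
Definition word_pt (w : seq nat) : nat * bool -> nat * bool :=
  foldr (fun g f => gen_pt g \o f) id w.

Definition valid_word (n : nat) (w : seq nat) : bool := all (fun g => g < n)%N w.

Definition represents (n : nat) (w : seq nat) (s : {perm 'I_n * bool}) : Prop :=
  valid_word n w /\
  forall z : 'I_n * bool, ((nat_of_ord (s z).1, (s z).2) = word_pt w (nat_of_ord z.1, z.2)).

Definition reduced_word (n : nat) (s : {perm 'I_n * bool}) (w : seq nat) : Prop :=
  represents w s /\ forall w', represents w' s -> (size w <= size w')%N.

Definition redword (n : nat) (s : {perm 'I_n * bool}) : seq nat :=
  epsilon (inhabits [::]) (reduced_word s).

Definition l1 (n : nat) (s : {perm 'I_n * bool}) : nat := count (pred1 0%N) (redword s).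
Definition l2 (n : nat) (s : {perm 'I_n * bool}) : nat :=
  count (fun g => g != 0%N) (redword s).

(* Action of Sigma(n) on simple tensors x_1 (x) ... (x) x_n, encoded as the *)
(* word [:: x_1; ...; x_n] : seq H.                                          *)
Section Action.
Variables (C : pzRingType) (H : lmodType C) (bar : H -> H).

Definition gen_act (g : nat) (w : seq H) : seq H :=
  if g == 0%N then [seq (if i == 0%N then bar else id) (nth 0 w i) | i <- iota 0 (size w)]
  else [seq nth 0 w (swapn g.-1 g i) | i <- iota 0 (size w)].

Definition word_act (w : seq nat) : seq H -> seq H :=
  foldr (fun g f => gen_act g \o f) id w.

Definition sigma_act (n : nat) (s : {perm 'I_n * bool}) (w : seq H) : seq H :=
  word_act (redword s) w.
End Action.

(* The algebraic full Fock space, as formal finite linear combinations of   *)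
(* simple tensors: an element is a list of (coefficient, word) pairs, the   *)
(* pair (c, [:: x_1; ...; x_n]) standing for c x_1 (x) ... (x) x_n and the  *)
(* empty word for Omega. All operators are defined on simple tensors and    *)
(* extended linearly; the inner products are extended sesquilinearly.       *)
Section Fock.
Local Open Scope complex_scope.
Variables (R : rcfType) (H : lmodType R[i]) (ip : H -> H -> R[i]) (bar : H -> H).
Variables (alpha q : R).

Definition Fock := seq (R[i] * seq H).

Definition ip_word (u v : seq H) : R[i] :=
  if size u == size v then \prod_(p <- zip u v) ip p.1 p.2 else 0.

Definition ip00 (f g : Fock) : R[i] :=
  \sum_(a <- f) \sum_(b <- g) conjc a.1 * b.1 * ip_word a.2 b.2.

Definition P_word (w : seq H) : Fock :=
  [seq (((alpha ^+ l1 s) * (q ^+ l2 s))%:C, sigma_act bar s w) | s <- Sigma (size w)].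

Definition P_aq (f : Fock) : Fock :=
  flatten [seq [seq (a.1 * c.1, c.2) | c <- P_word a.2] | a <- f].

Definition ip_aq (f g : Fock) : R[i] := ip00 f (P_aq g).

Definition rstar (x : H) (f : Fock) : Fock := [seq (a.1, rcons a.2 x) | a <- f].

Definition del_at (j : nat) (w : seq H) : seq H := take j w ++ drop j.+1 w.

(* r_q(x): with 0-based index j = k-1, coefficient q^{n-k} = q^{n-1-j} *)
Definition r_q (x : H) (f : Fock) : Fock :=
  flatten [seq [seq (a.1 * (q ^+ (size a.2 - 1 - j))%:C * ip x (nth 0 a.2 j), del_at j a.2)
               | j <- iota 0 (size a.2)] | a <- f].

(* l_q(x): coefficient q^{k-1} = q^j *)
Definition l_q (x : H) (f : Fock) : Fock :=
  flatten [seq [seq (a.1 * (q ^+ j)%:C * ip x (nth 0 a.2 j), del_at j a.2)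
               | j <- iota 0 (size a.2)] | a <- f].

(* q^{N-1} (on H^{(x)0} it is multiplied by l_q(.)Omega = 0 anyway) *)
Definition qNm1 (f : Fock) : Fock := [seq ((q ^+ (size a.2).-1)%:C * a.1, a.2) | a <- f].

Definition b_formula (x : H) (f : Fock) : Fock :=
  r_q x f ++ [seq (alpha%:C * c.1, c.2) | c <- l_q (bar x) (qNm1 f)].

Definition is_aq_adjoint (A B : Fock -> Fock) : Prop :=
  forall f g : Fock, ip_aq (A g) f = ip_aq g (B f).
End Fock.

From mathcomp Require Import all_boot all_order all_algebra all_fingroup.
From mathcomp Require Import complex.
From mathcomp Require Import zify ring.
From Stdlib Require Import ClassicalEpsilon.
Import Order.TTheory GRing.Theory Num.Theory.
Set Implicit Arguments. Unset Strict Implicit. Unset Printing Implicit Defensive.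

(* A signed permutation s is determined by its window, the list of signed
   points s^-1(1), ..., s^-1(n).  Sorting the window by adjacent transpositions
   and by sign changes of its head shows that s has a word with as many pi_0's
   as the window has negative entries and as many pi_i's (i >= 1) as it has
   type-B inversions; since no generator lowers either statistic by more than
   its own contribution, every reduced word realises both, which computes l_1
   and l_2.  Enumerating the windows by their last entry +-(k+1), this entry
   contributes q^(n-1-k), resp. alpha q^(n-1+k), to alpha^l_1 q^l_2 and pairs
   x with x_k, resp. bar x_k, in <.,.>_{0,0}: these are the coefficients of
   r_q(x) and of alpha q^(n-1) l_q(bar x).  The identity is formal in the
   space of finite sums of simple tensors, so of the hypotheses on ip and bar
   only involutivity and self-adjointness of bar are used. *)

Definition signed_val (p : nat * bool) : int :=
  if p.2 then (- (Posz p.1.+1))%R else Posz p.1.+1.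

(* [binv r] counts the pairs i < j with r_i > r_j or r_i + r_j < 0; together
   with the number [nneg r] of negative entries this is the type-B length. *)
Definition binv_pair (e p : nat * bool) : nat :=
  ((signed_val p < signed_val e)%R + (signed_val e + signed_val p < 0)%R)%N.

Fixpoint binv (r : seq (nat * bool)) : nat :=
  if r is e :: r' then (\sum_(p <- r') binv_pair e p + binv r')%N else 0%N.

Definition nneg (r : seq (nat * bool)) : nat := count snd r.

Lemma binv_cat s1 s2 :
  binv (s1 ++ s2) = (binv s1 + binv s2 + \sum_(e <- s1) \sum_(p <- s2) binv_pair e p)%N.
Proof.
elim: s1 => [|e s1 IH] /=; first by rewrite big_nil !addn0.
rewrite IH big_cons big_cat /=; lia.
Qed.

Lemma binv_rcons s e : binv (rcons s e) = (binv s + \sum_(p <- s) binv_pair p e)%N.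
Proof.
rewrite -cats1 binv_cat /= big_nil !addn0; congr (_ + _)%N.
by apply: eq_bigr => p _; rewrite big_cons big_nil addn0.
Qed.

Lemma signed_val_sflip p : signed_val (sflip p) = (- signed_val p)%R.
Proof. by case: p => k [] //=; rewrite /signed_val /= opprK. Qed.

Lemma binv_pair_sflip e p : binv_pair (sflip e) p = binv_pair e p.
Proof.
rewrite /binv_pair signed_val_sflip.
have -> : (signed_val p < - signed_val e)%R = (signed_val e + signed_val p < 0)%R.
  by apply/idP/idP; lia.
have -> : (- signed_val e + signed_val p < 0)%R = (signed_val p < signed_val e)%R.
  by apply/idP/idP; lia.
by rewrite addnC.
Qed.

Lemma binv_pair_swap_le x y : (binv_pair y x <= binv_pair x y + 1)%N.
Proof.
rewrite /binv_pair addrC; move: (signed_val x) (signed_val y) => a b.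
by case: (a + b < 0)%R; case: (ltgtP a b).
Qed.

Lemma binv_pair_swap_lt x y :
  (signed_val y < signed_val x)%R -> binv_pair x y = (binv_pair y x + 1)%N.
Proof.
rewrite /binv_pair [(signed_val y + _)%R]addrC.
move: (signed_val x) (signed_val y) => a b ba.
by rewrite ba (lt_gtF ba); case: (a + b < 0)%R.
Qed.

Lemma binv_pair_nat a s c t : binv_pair (a, s) (c, t) =
  ((if s then (if t then a < c else false) else (if t then true else c < a)) +
   (if s then (if t then true else c < a) else (if t then a < c else false)))%N.
Proof.
rewrite /binv_pair /signed_val /=; case: s; case: t => /=;
  by congr (_ + _)%N; congr nat_of_bool; apply/idP/idP; lia.
Qed.

Lemma binv_bump k r : binv [seq (bump k e.1, e.2) | e <- r] = binv r.
Proof.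
have ltn_bump2 a c : (bump k a < bump k c) = (a < c) by rewrite !ltnNge leq_bump2.
elim: r => //= -[a s] r ->; congr (_ + _)%N; rewrite big_map.
by apply: eq_bigr => -[c t] _ /=; rewrite !binv_pair_nat !ltn_bump2.
Qed.

Definition flip_head (r : seq (nat * bool)) :=
  if r is e :: r' then sflip e :: r' else [::].

Lemma binv_flip_head r : binv (flip_head r) = binv r.
Proof.
case: r => //= e r; congr (_ + _)%N.
by apply: eq_bigr => p _; rewrite binv_pair_sflip.
Qed.

Definition swap_at (i : nat) (r : seq (nat * bool)) :=
  take i r ++ nth (0%N, false) r i.+1 :: nth (0%N, false) r i :: drop i.+2 r.

Section SwapAt.
Variables (i : nat) (r : seq (nat * bool)).
Hypothesis lt_i_r : i.+1 < size r.

Local Notation ri := (nth (0%N, false) r i).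
Local Notation ri1 := (nth (0%N, false) r i.+1).

Lemma swap_at_split : r = take i r ++ ri :: ri1 :: drop i.+2 r.
Proof.
rewrite -{1}(cat_take_drop i r); congr (_ ++ _).
by rewrite (drop_nth (0%N, false)) ?(drop_nth (0%N, false) lt_i_r) // ltnW.
Qed.

Lemma perm_swap_at : perm_eq (swap_at i r) r.
Proof.
rewrite [X in perm_eq _ X]swap_at_split /swap_at perm_cat2l.
exact/permPl/(perm_catCA [:: ri1] [:: ri]).
Qed.

Lemma size_swap_at : size (swap_at i r) = size r.
Proof. exact: perm_size perm_swap_at. Qed.

Lemma nneg_swap_at : nneg (swap_at i r) = nneg r.
Proof. by rewrite /nneg (seq.permP perm_swap_at). Qed.

Lemma binv_swap_at_sum :
  (binv (swap_at i r) + binv_pair ri ri1 = binv r + binv_pair ri1 ri)%N.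
Proof.
rewrite [in binv r]swap_at_split /swap_at !binv_cat /=.
have -> : \sum_(e <- take i r) \sum_(p <- [:: ri1, ri & drop i.+2 r]) binv_pair e p =
          \sum_(e <- take i r) \sum_(p <- [:: ri, ri1 & drop i.+2 r]) binv_pair e p.
  by apply: eq_bigr => e _; rewrite !big_cons; lia.
rewrite !big_cons; lia.
Qed.

Lemma binv_swap_at_le : (binv (swap_at i r) <= binv r + 1)%N.
Proof. by have := binv_swap_at_sum; have := binv_pair_swap_le ri ri1; lia. Qed.

Lemma binv_swap_at_descent :
  (signed_val ri1 < signed_val ri)%R -> binv r = (binv (swap_at i r) + 1)%N.
Proof. by move=> /binv_pair_swap_lt; have := binv_swap_at_sum; lia. Qed.

Lemma nth_swap_at d j : nth d (swap_at i r) j = nth d r (swapn i i.+1 j).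
Proof.
rewrite /swap_at nth_cat size_take (ltnW lt_i_r) /swapn.
case: (ltngtP j i) => [ji|ij|->].
- by rewrite nth_take // (ltn_eqF (ltn_trans ji (ltnSn _))).
- have [m ->] : exists m, j = (i + m.+1)%N by exists (j - i).-1; lia.
  rewrite (_ : i + m.+1 - i = m.+1)%N; last by lia.
  case: m => [|k] /=.
  + by rewrite addn1 eqxx; apply: set_nth_default; rewrite ltnW.
  + rewrite (_ : (i + k.+2 == i.+1) = false); last by apply/eqP; lia.
    by rewrite nth_drop; congr nth; lia.
- by rewrite subnn /=; apply: set_nth_default.
Qed.

End SwapAt.

Lemma swapnK i j : i != j -> involutive (swapn i j).
Proof.
rewrite /swapn => ij k.
case: (eqVneq k i) => [->|ki]; first by rewrite eq_sym (negbTE ij) eqxx.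
case: (eqVneq k j) => [->|kj]; first by rewrite eqxx.
by rewrite (negbTE ki) (negbTE kj).
Qed.

Lemma swap_atK i r : i.+1 < size r -> swap_at i (swap_at i r) = r.
Proof.
move=> hi; have hi' : i.+1 < size (swap_at i r) by rewrite size_swap_at.
apply: (@eq_from_nth _ (0%N, false)); first by rewrite !size_swap_at.
move=> j _; rewrite nth_swap_at // nth_swap_at // swapnK //.
by rewrite neq_ltn ltnSn.
Qed.

Lemma gen_ptK g : involutive (gen_pt g).
Proof.
case=> k b; rewrite /gen_pt; case: (eqVneq g 0%N) => [_|gn0] /=.
  by case: (eqVneq k 0%N) => [->|kn] /=; rewrite ?negbK ?(negbTE kn).
by rewrite swapnK //; case: g gn0 => // g _; rewrite /= neq_ltn ltnSn.
Qed.

Lemma gen_pt_sflip g z : gen_pt g (sflip z) = sflip (gen_pt g z).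
Proof. by case: z => k b; rewrite /gen_pt /sflip; case: (g == 0%N); case: (k == 0%N). Qed.

Lemma gen_pt_lt n g z : g < n -> z.1 < n -> (gen_pt g z).1 < n.
Proof.
case: z => k b gn /= kn; rewrite /gen_pt; case: (g == 0%N); first by case: (k == 0%N).
rewrite /= /swapn; case: (k == g.-1); case: (k == g) => //.
exact: leq_ltn_trans (leq_pred g) gn.
Qed.

Lemma word_pt_rcons w g z : word_pt (rcons w g) z = word_pt w (gen_pt g z).
Proof. by elim: w => //= g' w IH; rewrite /comp IH. Qed.

Lemma word_pt_revK w : cancel (word_pt w) (word_pt (rev w)).
Proof. by elim: w => //= g w IH z; rewrite rev_cons word_pt_rcons /comp gen_ptK IH. Qed.

Lemma word_pt_Krev w : cancel (word_pt (rev w)) (word_pt w).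
Proof. by rewrite -{2}(revK w); apply: word_pt_revK. Qed.

Lemma word_pt_sflip w z : word_pt w (sflip z) = sflip (word_pt w z).
Proof. by elim: w => //= g w IH; rewrite /comp IH gen_pt_sflip. Qed.

(* The window of the signed permutation represented by [w]: its i-th entry is
   the image of the point [(i, false)] under the inverse permutation. *)
Definition word_window (w : seq nat) (n : nat) : seq (nat * bool) :=
  [seq word_pt (rev w) (i, false) | i <- iota 0 n].

Definition id_window (n : nat) : seq (nat * bool) := [seq (i, false) | i <- iota 0 n].

Definition is_window (n : nat) (r : seq (nat * bool)) : bool :=
  perm_eq (map fst r) (iota 0 n).

Lemma size_word_window w n : size (word_window w n) = n.
Proof. by rewrite size_map size_iota. Qed.

Lemma size_window n r : is_window n r -> size r = n.
Proof. by move/perm_size; rewrite size_map size_iota. Qed.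

Lemma binv_id_window_from a n : binv [seq (i, false) | i <- iota a n] = 0%N.
Proof.
elim: n a => //= n IH a; rewrite IH addn0 big_map big1_seq // => i /andP[_].
rewrite mem_iota => /andP[ai _]; rewrite /binv_pair /signed_val /=.
suff -> : (Posz i.+1 < Posz a.+1)%R = false by [].
by apply/negbTE; rewrite ltz_nat; lia.
Qed.

Lemma nneg_id_window n : nneg (id_window n) = 0%N.
Proof. by rewrite /nneg /id_window; elim: (iota 0 n) => //= i s ->. Qed.

Definition gen_window (g : nat) (r : seq (nat * bool)) : seq (nat * bool) :=
  if g is i.+1 then swap_at i r else flip_head r.

Definition is_descent (g : nat) (r : seq (nat * bool)) : bool :=
  if g is i.+1 then (signed_val (nth (0%N, false) r i.+1) < signed_val (nth (0%N, false) r i))%R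
  else (head (0%N, false) r).2.

Lemma word_window_cons n g w : g < n ->
  word_window (g :: w) n = gen_window g (word_window w n).
Proof.
case: g => [|i] gn.
  case: n gn => // n _; rewrite /word_window /= rev_cons word_pt_rcons /=.
  congr (_ :: _); first by rewrite -word_pt_sflip.
  apply/eq_in_map => i; rewrite mem_iota => /andP[hi _].
  by rewrite word_pt_rcons /gen_pt /=; case: i hi.
apply: (@eq_from_nth _ (0%N, false)); first by rewrite size_swap_at ?size_word_window.
rewrite size_word_window => j jn.
have sn : swapn i i.+1 j < n by have := @gen_pt_lt n i.+1 (j, false) gn jn.
rewrite nth_swap_at ?size_word_window // /word_window !(nth_map 0%N) ?size_iota //.
by rewrite rev_cons word_pt_rcons !nth_iota.
Qed.

Section GenWindow.
Variables (g : nat) (r : seq (nat * bool)).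
Hypothesis lt_g_r : g < size r.

Lemma perm_gen_window : perm_eq (map fst (gen_window g r)) (map fst r).
Proof.
case: g lt_g_r => [|i] hi /=; last exact/perm_map/perm_swap_at.
by case: r hi => // -[k b] r'.
Qed.

Lemma gen_windowK : gen_window g (gen_window g r) = r.
Proof.
case: g lt_g_r => [|i] hi /=; last exact: swap_atK.
by case: r hi => //= -[k b] r' _; rewrite /sflip /= negbK.
Qed.

Lemma gen_window_stats_le :
  (nneg (gen_window g r) <= nneg r + (g == 0%N))%N /\
  (binv (gen_window g r) <= binv r + (g != 0%N))%N.
Proof.
case: g lt_g_r => [|i] hi /=; last first.
  by rewrite nneg_swap_at // addn0; split => //; exact: binv_swap_at_le.
rewrite binv_flip_head addn0; split => //.
by case: r hi => //= -[k b] r' _; rewrite /nneg /=; case: b; lia.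
Qed.

Lemma gen_window_descent : is_descent g r ->
  nneg r = (nneg (gen_window g r) + (g == 0%N))%N /\
  binv r = (binv (gen_window g r) + (g != 0%N))%N.
Proof.
case: g lt_g_r => [|i] hi /=; last first.
  by move=> d; rewrite nneg_swap_at // addn0 (binv_swap_at_descent hi d).
rewrite binv_flip_head; case: r hi => //= -[k b] r' _ /=.
by case: b => // _; split; lia.
Qed.

End GenWindow.

Lemma is_window_gen n g r : g < n -> is_window n r -> is_window n (gen_window g r).
Proof.
move=> gn hr; rewrite /is_window (perm_trans _ hr) // perm_gen_window //.
by rewrite (size_window hr).
Qed.

Lemma word_window_stats_le n w : valid_word n w ->
  (nneg (word_window w n) <= count (pred1 0%N) w)%N /\
  (binv (word_window w n) <= count (fun g => g != 0%N) w)%N.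
Proof.
elim: w => [|g w IH] /=.
  by rewrite -[word_window _ _]/(id_window n) nneg_id_window binv_id_window_from.
case/andP=> gn /IH [le0 leS]; rewrite word_window_cons //.
have [] := @gen_window_stats_le g (word_window w n); first by rewrite size_word_window.
move=> h0 hS; split; [apply: leq_trans h0 _ | apply: leq_trans hS _];
  by rewrite addnC leq_add2l.
Qed.

Lemma window_without_descent n r : is_window n r ->
  ~~ has (is_descent^~ r) (iota 0 n) -> r = id_window n.
Proof.
move=> hr nodesc; have sr := size_window hr.
have nodesc_at g : g < n -> ~~ is_descent g r.
  by move=> gn; apply: contra nodesc => d; apply/hasP; exists g; rewrite ?mem_iota.
pose le_val a b := (signed_val a <= signed_val b)%R.
have so : sorted le_val r.
  apply/(sortedP (0%N, false)) => i hi; rewrite /le_val leNgt.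
  by apply: (nodesc_at i.+1); rewrite -sr.
have pos : all (fun p => ~~ p.2) r.
  case: r sr so nodesc_at {hr nodesc} => //= e r' <- pa /(_ 0%N isT) /= ep.
  rewrite ep /=; have := order_path_min (fun b a c (h1 : le_val a b) h2 => le_trans h1 h2) pa.
  apply: sub_all => p; rewrite /le_val /=; apply: contraTN; rewrite -ltNge /signed_val.
  by move: ep; case: e.2 => // _; case: p.2 => // _; lia.
have -> : r = [seq (i, false) | i <- map fst r].
  rewrite -map_comp -[LHS]map_id; apply/eq_in_map => p pr /=.
  by move/allP/(_ p pr): pos; case: p {pr} => ? [].
congr map; apply: (sorted_eq leq_trans anti_leq) => //; last exact: iota_sorted.
rewrite sorted_map; apply: (sub_in_sorted _ pos so) => p q /= pp qp.
by case: p q pp qp => [a []] [b []] //= _ _; rewrite /le_val /signed_val /=; lia.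
Qed.

Lemma window_word_exists n r : is_window n r ->
  exists w, [/\ valid_word n w, word_window w n = r,
    count (pred1 0%N) w = nneg r & count (fun g => g != 0%N) w = binv r].
Proof.
have [N] := ubnP (nneg r + binv r); elim: N r => // N IH r /ltnSE hN hr.
have [/hasP[g]|nodesc] := boolP (has (is_descent^~ r) (iota 0 n)); last first.
  rewrite (window_without_descent hr nodesc); exists [::].
  by rewrite nneg_id_window binv_id_window_from.
rewrite mem_iota /= => gn desc; have gr : g < size r by rewrite (size_window hr).
have [en eb] := gen_window_descent gr desc.
have [|w [vw ww e0 eS]] := IH (gen_window g r) _ (is_window_gen gn hr); first by lia.
exists (g :: w); split => /=; first by rewrite gn.
- by rewrite word_window_cons // ww gen_windowK.
- by rewrite e0 en addnC eq_sym.
- by rewrite eS eb addnC eq_sym.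
Qed.

Definition natpair n (z : 'I_n * bool) : nat * bool := (nat_of_ord z.1, z.2).

Lemma natpair_sflip n (z : 'I_n * bool) : natpair (sflip z) = sflip (natpair z).
Proof. by []. Qed.

Definition window_of n (s : {perm 'I_n * bool}) : seq (nat * bool) :=
  [seq natpair ((s^-1)%g (i, false)) | i <- enum 'I_n].

Lemma signedP n (s : {perm 'I_n * bool}) :
  signedb s -> forall z, s (sflip z) = sflip (s z).
Proof. by move=> /forallP h z; apply/eqP. Qed.

Lemma signed_inv n (s : {perm 'I_n * bool}) : signedb s -> signedb (s^-1)%g.
Proof.
move=> hs; apply/forallP => z; apply/eqP; apply: (@perm_inj _ s).
by rewrite signedP // !permKV.
Qed.

Lemma represents_window n w (s : {perm 'I_n * bool}) :
  represents w s -> word_window w n = window_of s.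
Proof.
case=> _ rep; rewrite /word_window /window_of -val_enum_ord -map_comp.
apply/eq_map => i /=; have := rep ((s^-1)%g (i, false)); rewrite permKV /= => ->.
by rewrite word_pt_revK.
Qed.

Lemma perm_iota_of n (t : seq nat) : uniq t -> all (fun k => k < n) t -> size t = n ->
  perm_eq t (iota 0 n).
Proof.
move=> ut alt st; apply: uniq_perm => //; first exact: iota_uniq.
have sub : {subset t <= iota 0 n} by move=> k /(allP alt); rewrite mem_iota.
by have [_] := uniq_min_size ut sub (eq_leq (etrans (size_iota 0 n) (esym st))).
Qed.

Lemma window_of_is_window n (s : {perm 'I_n * bool}) : signedb s -> is_window n (window_of s).
Proof.
move=> hs; apply: perm_iota_of; last by rewrite !size_map -enumT size_enum_ord.
- rewrite -map_comp map_inj_uniq ?enum_uniq // => i j /= /val_inj eq1.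
  set zi := (s^-1)%g (i, false) in eq1; set zj := (s^-1)%g (j, false) in eq1.
  case: (eqVneq zi.2 zj.2) => [e2|n2].
    have : zi = zj by case: zi zj eq1 e2 => ? ? [? ?] /= -> ->.
    by move/(congr1 s); rewrite !permKV => -[].
  have : zj = sflip zi by case: zi zj eq1 n2 => ? [] [? []] //= ->.
  by move/(congr1 s); rewrite signedP // !permKV.
- by apply/allP => k /mapP [p /mapP [i _ ->] ->] /=.
Qed.

Lemma window_represents n w (s : {perm 'I_n * bool}) : signedb s ->
  valid_word n w -> word_window w n = window_of s -> represents w s.
Proof.
move=> hs vw ww; split => // z.
suff key y : natpair y = word_pt w (natpair ((s^-1)%g y)).
  by rewrite -[in RHS](permK s z) -key.
case: y => i b.
have e0 : word_pt (rev w) (nat_of_ord i, false) = natpair ((s^-1)%g (i, false)).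
  have := congr1 (fun l => nth (0%N, false) l (nat_of_ord i)) ww.
  rewrite /word_window /window_of (nth_map 0%N) ?size_iota // nth_iota //.
  by rewrite (nth_map i) ?size_enum_ord // nth_ord_enum.
have e1 : natpair ((s^-1)%g (i, b)) = word_pt (rev w) (nat_of_ord i, b).
  case: b; last by rewrite e0.
  rewrite -[(i, true)]/(sflip (i, false)) signedP ?signed_inv //.
  by rewrite natpair_sflip -e0 -word_pt_sflip.
by rewrite e1 word_pt_Krev.
Qed.

Lemma exists_min_size (P : seq nat -> Prop) : (exists w, P w) ->
  exists w, P w /\ forall w', P w' -> (size w <= size w')%N.
Proof.
case=> w0 p0; have [N] := ubnP (size w0); elim: N w0 p0 => // N IH w pw /ltnSE sw.
case: (classic (exists w', P w' /\ (size w' < size w)%N)) => [[w' [pw' lt]]|nex].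
  by apply: (IH w') => //; exact: leq_trans lt sw.
exists w; split => // w' pw'; rewrite leqNgt; apply/negP => lt; apply: nex; by exists w'.
Qed.

Lemma l1_l2_window n (s : {perm 'I_n * bool}) : signedb s ->
  [/\ l1 s = nneg (window_of s), l2 s = binv (window_of s) & represents (redword s) s].
Proof.
move=> hs; have [wE [vE wwE c0E cSE]] := window_word_exists (window_of_is_window hs).
have repE := window_represents hs vE wwE.
have [rep mn] : reduced_word s (redword s).
  by apply: epsilon_spec; apply: exists_min_size; exists wE.
have [lo0 loS] := word_window_stats_le (proj1 rep); rewrite (represents_window rep) in lo0 loS.
have split_size u : size u = (count (pred1 0%N) u + count (fun g => g != 0%N) u)%N.
  by rewrite -(count_predC (pred1 0%N) u).
have := mn wE repE; rewrite /l1 /l2 !split_size c0E cSE => le; split => //; lia.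
Qed.

Section WindowAction.
Variables (C : pzRingType) (H : lmodType C) (bar : H -> H).
Hypothesis bar_invol : involutive bar.

Definition window_entry (p : nat * bool) (t : seq H) : H :=
  (if p.2 then bar else id) (nth 0%R t p.1).

Definition window_act (r : seq (nat * bool)) (t : seq H) : seq H :=
  [seq window_entry p t | p <- r].

Lemma window_entry_sflip p t : window_entry (sflip p) t = bar (window_entry p t).
Proof. by case: p => k [] /=; rewrite /window_entry /= ?bar_invol. Qed.

Lemma size_word_act w t : size (word_act bar w t) = size t.
Proof.
elim: w => //= g w IH; rewrite /comp /gen_act.
by case: (g == 0%N); rewrite size_map size_iota.
Qed.

Lemma nth_gen_act g t i : i < size t ->
  nth 0%R (gen_act bar g t) i = window_entry (gen_pt g (i, false)) t.
Proof.
move=> it; rewrite /gen_act /gen_pt /window_entry; case: (g == 0%N);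
  rewrite (nth_map 0%N) ?size_iota // nth_iota //=.
by case: (i == 0%N).
Qed.

Lemma nth_word_act w t i : valid_word (size t) w -> i < size t ->
  nth 0%R (word_act bar w t) i = window_entry (word_pt (rev w) (i, false)) t.
Proof.
elim: w i => //= g w IH i /andP[gt wt] it.
rewrite /comp nth_gen_act ?size_word_act // rev_cons word_pt_rcons.
case E: (gen_pt g (i, false)) => [j c].
have jt : j < size t by have := @gen_pt_lt (size t) g (i, false) gt it; rewrite E.
rewrite {1}/window_entry /= IH //; case: c E => _ //=.
by rewrite -[(j, true)]/(sflip (j, false)) word_pt_sflip window_entry_sflip.
Qed.

Lemma sigma_act_window n (s : {perm 'I_n * bool}) t : signedb s -> size t = n ->
  sigma_act bar s t = window_act (window_of s) t.
Proof.
move=> hs st; have [_ _ rep] := l1_l2_window hs; rewrite /sigma_act.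
apply: (@eq_from_nth _ 0%R); first by rewrite size_word_act size_map size_map size_enum_ord.
rewrite size_word_act => i it.
have vw : valid_word (size t) (redword s) by rewrite st; case: rep.
rewrite nth_word_act // /window_act -(represents_window rep) (nth_map (0%N, false)).
  by rewrite /word_window (nth_map 0%N) ?nth_iota -?st ?size_iota.
by rewrite size_word_window -st.
Qed.

End WindowAction.

Definition signed_points (n : nat) : seq (nat * bool) :=
  [seq (k, b) | k <- iota 0 n, b <- [:: false; true]].

Definition ext_window (p : nat * bool) (r : seq (nat * bool)) : seq (nat * bool) :=
  rcons [seq (bump p.1 e.1, e.2) | e <- r] p.

Fixpoint windows (n : nat) : seq (seq (nat * bool)) :=
  if n is m.+1 then [seq ext_window p r | p <- signed_points m.+1, r <- windows m]
  else [:: [::]].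

Lemma windowsS m :
  windows m.+1 = [seq ext_window p r | p <- signed_points m.+1, r <- windows m].
Proof. by []. Qed.

Lemma is_window_ext m k b r : k < m.+1 -> is_window m r -> is_window m.+1 (ext_window (k, b) r).
Proof.
move=> km hr; have ur : uniq (map fst r) by rewrite (perm_uniq hr) iota_uniq.
apply: perm_iota_of.
- rewrite /ext_window map_rcons -map_comp rcons_uniq /=; apply/andP; split.
    by apply/mapP => -[e _ /= /eqP]; rewrite (negbTE (neq_bump _ _)).
  by rewrite (map_comp (bump k) fst) map_inj_uniq //; exact: (can_inj (bumpK k)).
- rewrite /ext_window map_rcons all_rcons km /= -map_comp; apply/allP => j /mapP [e er ->] /=.
  have : e.1 \in iota 0 m by rewrite -(perm_mem hr); apply: map_f.
  by rewrite mem_iota /bump /=; lia.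
- by rewrite /ext_window size_map size_rcons size_map (size_window hr).
Qed.

Lemma unbump_ltn k m x : k < m.+1 -> x < m.+1 -> x != k -> unbump k x < m.
Proof. by rewrite /unbump => km xm /eqP xk; case: (ltnP k x) => h /=; lia. Qed.

Lemma windowsP n r : reflect (is_window n r) (r \in windows n).
Proof.
elim: n r => [|m IH] r.
  rewrite /= inE; apply: (iffP eqP) => [->|/size_window/size0nil //]; exact: perm_refl.
apply: (iffP idP).
  case/allpairsP => -[[k b] r'] [/allpairsP [[k' b'] [kin _ [-> _]]] /IH hr' ->].
  by apply: is_window_ext => //; move: kin; rewrite mem_iota => /andP[].
move=> hr; have sr := size_window hr.
case/lastP: r hr sr => [|r0 [k b]] hr sr //.
have ur : uniq (map fst (rcons r0 (k, b))) by rewrite (perm_uniq hr) iota_uniq.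
move: (ur); rewrite map_rcons rcons_uniq => /andP[kn ur0].
have mem_r y : (y \in iota 0 m.+1) = (y \in map fst (rcons r0 (k, b))) by rewrite (perm_mem hr).
have km : k < m.+1.
  by have := mem_r k; rewrite map_rcons mem_rcons inE eqxx mem_iota => /andP[].
set r' := [seq (unbump k e.1, e.2) | e <- r0].
have -> : rcons r0 (k, b) = ext_window (k, b) r'.
  rewrite /ext_window /r' -map_comp; congr rcons; rewrite -[LHS]map_id.
  apply/eq_in_map => e er /=; rewrite unbumpKcond; case: (eqVneq e.1 k) => [ek|_].
    by move: kn; rewrite /= -ek map_f.
  by case: e {er}.
apply: allpairs_f; first by apply: allpairs_f; rewrite ?mem_iota //= !inE; case: (b) .
apply/IH/perm_iota_of.
- rewrite /r' -map_comp (map_comp (unbump k) fst) map_inj_in_uniq // => i j hi hj.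
  have hi' : i \in predC1 k by rewrite inE; apply: contraNneq kn => <-.
  have hj' : j \in predC1 k by rewrite inE; apply: contraNneq kn => <-.
  by move/(congr1 (bump k)); rewrite !unbumpK.
- rewrite /r' -map_comp; apply/allP => j /mapP [e er ->] /=.
  have : e.1 \in iota 0 m.+1 by rewrite mem_r map_rcons mem_rcons inE map_f ?orbT.
  have : e.1 != k by apply/negP => /eqP ek; move: kn; rewrite /= -ek map_f.
  by rewrite mem_iota => ek /andP[_ xm]; exact: unbump_ltn km xm ek.
- by rewrite size_map /r' size_map; move: sr; rewrite size_rcons => -[].
Qed.

Lemma windows_uniq n : uniq (windows n).
Proof.
elim: n => [//|m IH]; apply: allpairs_uniq => //.
  apply: allpairs_uniq => //; first exact: iota_uniq.
  by move=> [k b] [k' b'] _ _ /= [-> ->].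
move=> [p r] [p' r'] _ _ /= /rcons_inj [e1 ep]; rewrite ep in e1 *; congr pair.
have fi : injective (fun e : nat * bool => (bump p'.1 e.1, e.2)).
  by move=> [i c] [j d] [/(can_inj (bumpK _)) -> ->].
exact: (inj_map fi e1).
Qed.

Lemma window_of_inj n (s1 s2 : {perm 'I_n * bool}) : signedb s1 -> signedb s2 ->
  window_of s1 = window_of s2 -> s1 = s2.
Proof.
move=> h1 h2 /eq_in_map e; apply: invg_inj; apply/permP => -[i b].
have e0 : (s1^-1)%g (i, false) = (s2^-1)%g (i, false).
  have := e i (mem_enum _ i); rewrite /natpair.
  by case: ((s1^-1)%g _) => [a c]; case: ((s2^-1)%g _) => [a' c'] /= [/val_inj -> ->].
case: b => //; rewrite -[(i, true)]/(sflip (i, false)).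
by rewrite !signedP ?signed_inv // e0.
Qed.

Lemma window_of_surj n r : is_window n r ->
  exists2 s : {perm 'I_n * bool}, signedb s & window_of s = r.
Proof.
case: n r => [|m] r hr.
  exists 1%g; first by apply/forallP => -[[]].
  by rewrite (size0nil (size_window hr)) /window_of; case: (enum 'I_0) (size_enum_ord 0).
have ur : uniq (map fst r) by rewrite (perm_uniq hr) iota_uniq.
have sr := size_window hr.
have bd j : j < m.+1 -> (nth (0%N, false) r j).1 < m.+1.
  move=> jm; have : (nth (0%N, false) r j).1 \in iota 0 m.+1.
    by rewrite -(perm_mem hr) -(nth_map _ 0%N) ?sr // mem_nth // size_map sr.
  by rewrite mem_iota.
pose f (z : 'I_m.+1 * bool) : 'I_m.+1 * bool :=
  (inord (nth (0%N, false) r z.1).1, (nth (0%N, false) r z.1).2 (+) z.2).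
have finj : injective f.
  move=> [i b] [j c] [] /(congr1 (@nat_of_ord _)); rewrite !inordK ?bd // => eij ebc.
  have eq : i = j.
    apply: val_inj => /=; apply/eqP; rewrite -(nth_uniq 0%N _ _ ur) ?size_map ?sr //.
    by rewrite !(nth_map (0%N, false)) ?sr // eij.
  by move: ebc; rewrite eq => /addbI ->.
have gs : signedb (perm finj) by apply/forallP => -[i b]; rewrite !permE /f /sflip /= addbN.
exists (perm finj)^-1%g; first exact: signed_inv.
apply: (@eq_from_nth _ (0%N, false)); first by rewrite size_map size_enum_ord sr.
rewrite size_map size_enum_ord => j jm.
rewrite /window_of (nth_map ord0) ?size_enum_ord // invgK permE /f /natpair /=.
have -> : nth ord0 (enum 'I_m.+1) j = Ordinal jm by apply: val_inj; rewrite /= nth_enum_ord.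
by rewrite /= inordK ?bd // addbF; case: (nth _ r j).
Qed.

Lemma perm_Sigma_windows n : perm_eq [seq window_of s | s <- Sigma n] (windows n).
Proof.
apply: uniq_perm; last 1 first.
- move=> r; apply/mapP/windowsP => [[s hs ->]|/window_of_surj [s hs <-]].
    by apply: window_of_is_window; move: hs; rewrite mem_filter => /andP[].
  by exists s; rewrite // mem_filter hs mem_enum.
- rewrite map_inj_in_uniq ?filter_uniq -?enumT ?enum_uniq // => s1 s2.
  by rewrite !mem_filter => /andP[h1 _] /andP[h2 _]; exact: window_of_inj.
- exact: windows_uniq.
Qed.

Lemma big_Sigma_windows (V : nmodType) n (F : seq (nat * bool) -> V) :
  (\sum_(s <- Sigma n) F (window_of s) = \sum_(r <- windows n) F r)%R.
Proof. by rewrite -(big_map (@window_of n) xpredT) (perm_big _ (perm_Sigma_windows n)). Qed.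

Lemma nneg_ext_window k b r : nneg (ext_window (k, b) r) = (nneg r + b)%N.
Proof. by rewrite /nneg /ext_window -cats1 count_cat count_map /= addn0. Qed.

Lemma sum_leq_iota k m : (\sum_(j <- iota 0 m) (k <= j) = m - k)%N.
Proof.
rewrite -{1}(subn0 m) -/(index_iota 0 m); elim: m => [|m IH]; first by rewrite big_nil.
rewrite big_nat_recr //= IH; case: (leqP k m) => h /=; lia.
Qed.

Lemma sum_ltn_iota k m : (\sum_(j <- iota 0 m) (j < k) = minn m k)%N.
Proof.
rewrite -{1}(subn0 m) -/(index_iota 0 m); elim: m => [|m IH]; first by rewrite big_nil min0n.
rewrite big_nat_recr //= IH; case: (leqP k m) => h /=; lia.
Qed.

Lemma binv_ext_window m k b r : is_window m r -> k <= m ->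
  binv (ext_window (k, b) r) = (binv r + (if b then m + k else m - k))%N.
Proof.
have bump_lt j : (k < bump k j) = (k <= j) by rewrite /bump; case: (leqP k j) => h /=; lia.
have bump_gt j : (bump k j < k) = (j < k) by rewrite /bump; case: (leqP k j) => h /=; lia.
move=> hr km; rewrite /ext_window binv_rcons binv_bump big_map; congr (_ + _)%N.
transitivity (\sum_(e <- r) (if b then (1 + (e.1 < k))%N else nat_of_bool (k <= e.1))).
  apply: eq_bigr => -[j s] _ /=; rewrite binv_pair_nat bump_lt bump_gt.
  by case: b; case: s => //=; rewrite ?addn0 ?addn1.
rewrite -(big_map fst xpredT (fun j => if b then (1 + (j < k))%N else nat_of_bool (k <= j))).
rewrite (perm_big _ hr); case: b; last exact: sum_leq_iota.
by rewrite big_split /= sum1_size size_iota sum_ltn_iota (minn_idPr km).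
Qed.

Section Adjoint.
Local Open Scope ring_scope.
Local Open Scope complex_scope.
Variables (R : rcfType) (H : lmodType R[i]) (ip : H -> H -> R[i]) (bar : H -> H).
Hypothesis bar_invol : involutive bar.
Hypothesis bar_sadj : forall y z, ip (bar y) z = ip y (bar z).
Variables (alpha q : R) (x : H).

Lemma nth_del_at j k (v : seq H) : (k < size v)%N ->
  nth 0 (del_at k v) j = nth 0 v (bump k j).
Proof.
move=> kv; rewrite /del_at nth_cat size_take kv /bump.
case: (ltnP j k) => h /=; first by rewrite nth_take // add0n.
by rewrite nth_drop add1n; congr nth; lia.
Qed.

Lemma size_del_at k (v : seq H) : (k < size v)%N -> size (del_at k v) = (size v).-1.
Proof. by move=> kv; rewrite /del_at size_cat size_take kv size_drop; lia. Qed.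

Definition weight (r : seq (nat * bool)) : R[i] := ((alpha ^+ nneg r) * (q ^+ binv r))%:C.

Lemma window_act_ext k b r (v : seq H) : (k < size v)%N ->
  window_act bar (ext_window (k, b) r) v =
  rcons (window_act bar r (del_at k v)) (window_entry bar (k, b) v).
Proof.
move=> kv; rewrite /window_act /ext_window map_rcons -map_comp; congr rcons.
by apply: eq_map => e /=; rewrite /window_entry /= nth_del_at.
Qed.

Lemma weight_ext m k b r : is_window m r -> (k <= m)%N ->
  weight (ext_window (k, b) r) =
  weight r * (if b then (alpha * q ^+ (m + k))%:C else (q ^+ (m - k))%:C).
Proof.
move=> hr km; rewrite /weight nneg_ext_window (binv_ext_window _ hr km).
by case: b; rewrite -rmorphM; congr (_%:C); rewrite !exprD ?expr1 ?expr0 /=; ring.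
Qed.

Lemma ip_word_rcons u t y z : ip_word ip (rcons u y) (rcons t z) = ip_word ip u t * ip y z.
Proof.
rewrite /ip_word !size_rcons eqSS; case: eqP => e; last by rewrite mul0r.
by rewrite zip_rcons // big_rcons.
Qed.

Lemma big_P_word (F : R[i] -> seq H -> R[i]) v :
  \sum_(c <- P_word bar alpha q v) F c.1 c.2 =
  \sum_(r <- windows (size v)) F (weight r) (window_act bar r v).
Proof.
rewrite /P_word big_map -(big_Sigma_windows (size v) (fun r => F (weight r) (window_act bar r v))).
apply: eq_big_seq => s; rewrite mem_filter => /andP[hs _].
have [e1 e2 _] := l1_l2_window hs.
by rewrite /= e1 e2 (sigma_act_window bar_invol).
Qed.

Lemma big_P_aq (F : R[i] * seq H -> R[i]) f :
  \sum_(b <- P_aq bar alpha q f) F b =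
  \sum_(a <- f) \sum_(c <- P_word bar alpha q a.2) F (a.1 * c.1, c.2).
Proof. by rewrite /P_aq big_flatten big_map; apply: eq_bigr => a _; rewrite big_map. Qed.

Lemma b_formula_simple v : b_formula ip bar alpha q x [:: (1, v)] =
  [seq ((q ^+ (size v - 1 - j))%:C * ip x (nth 0 v j), del_at j v) | j <- iota 0 (size v)] ++
  [seq (alpha%:C * ((q ^+ (size v).-1)%:C * (q ^+ j)%:C * ip (bar x) (nth 0 v j)), del_at j v)
     | j <- iota 0 (size v)].
Proof.
rewrite /b_formula /r_q /l_q /qNm1 /= !cats0 -map_comp; congr (_ ++ _).
  by apply: eq_map => j; rewrite mul1r.
by apply: eq_map => j /=; rewrite mulr1.
Qed.

Lemma big_b_formula (K : seq H -> R[i]) f :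
  \sum_(d <- b_formula ip bar alpha q x f) d.1 * K d.2 =
  \sum_(a <- f) a.1 * \sum_(d <- b_formula ip bar alpha q x [:: (1, a.2)]) d.1 * K d.2.
Proof.
rewrite /b_formula big_cat /r_q big_flatten /= !big_map /l_q big_flatten /qNm1 !big_map -big_split.
apply: eq_bigr => a _; rewrite -/(b_formula ip bar alpha q x [:: (1, a.2)]).
rewrite b_formula_simple big_cat !big_map mulrDr !big_distrr /=.
by congr (_ + _); apply: eq_bigr => j _ /=; ring.
Qed.

Lemma adjoint_on_simple_tensors u v :
  \sum_(c <- P_word bar alpha q v) c.1 * ip_word ip (rcons u x) c.2 =
  \sum_(d <- b_formula ip bar alpha q x [:: (1, v)])
     d.1 * \sum_(c <- P_word bar alpha q d.2) c.1 * ip_word ip u c.2.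
Proof.
rewrite (big_P_word (fun a w => a * ip_word ip (rcons u x) w)) b_formula_simple big_cat.
rewrite /= !big_map; case E: (size v) => [|m].
  by rewrite /= big_cons big_nil /ip_word size_rcons /= mulr0 !big_nil addr0.
rewrite windowsS big_allpairs_dep /signed_points big_allpairs_dep -big_split.
apply: eq_big_seq => k; rewrite mem_iota => /andP[_ km].
have kv : (k < size v)%N by rewrite E.
rewrite (big_P_word (fun a w => a * ip_word ip u w)) size_del_at // E /=.
have last_entry b : \sum_(r <- windows m)
    weight (ext_window (k, b) r) * ip_word ip (rcons u x) (window_act bar (ext_window (k, b) r) v) =
    ((if b then (alpha * q ^+ (m + k))%:C else (q ^+ (m - k))%:C) * ip x (window_entry bar (k, b) v)) *
    \sum_(r <- windows m) weight r * ip_word ip u (window_act bar r (del_at k v)).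
  rewrite big_distrr; apply: eq_big_seq => r /windowsP hr /=.
  rewrite (weight_ext b hr km) window_act_ext // ip_word_rcons.
  by move: (if b then _ else _) (weight r) (ip_word _ _ _) (ip x _) => c1 c2 c3 c4; ring.
rewrite !big_cons big_nil /= addr0 !last_entry /window_entry /= -bar_sadj.
have -> : (m.+1 - 1 - k = m - k)%N by lia.
by rewrite exprD !rmorphM /=; ring.
Qed.

End Adjoint.

Local Open Scope ring_scope.

Theorem mainTheorem3 (R : rcfType) (H : lmodType R[i]) (ip : H -> H -> R[i])
  (ip_linr : forall x (a : R[i]) y z, ip x (a *: y + z) = a * ip x y + ip x z)
  (ip_herm : forall x y, ip y x = conjc (ip x y))
  (ip_pos : forall x, x != 0 -> 0 < ip x x)
  (bar : H -> H)
  (bar_lin : forall (a : R[i]) y z, bar (a *: y + z) = a *: bar y + bar z)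
  (bar_invol : forall y, bar (bar y) = y)
  (bar_sadj : forall y z, ip (bar y) z = ip y (bar z))
  (alpha q : R) (halpha : -1 < alpha < 1) (hq : -1 < q < 1) (x : H) :
  is_aq_adjoint ip bar alpha q (rstar x) (b_formula ip bar alpha q x).
Proof.
move=> f g; rewrite /ip_aq /ip00 /rstar big_map; apply: eq_bigr => a _ /=.
rewrite (big_P_aq bar alpha q (fun b => conjc a.1 * b.1 * ip_word ip (rcons a.2 x) b.2)).
rewrite (big_P_aq bar alpha q (fun b => conjc a.1 * b.1 * ip_word ip a.2 b.2)).
transitivity (\sum_(a' <- f) conjc a.1 * a'.1 *
   \sum_(c <- P_word bar alpha q a'.2) c.1 * ip_word ip (rcons a.2 x) c.2).
  by apply: eq_bigr => a' _; rewrite big_distrr; apply: eq_bigr => c _ /=; ring.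
transitivity (\sum_(d <- b_formula ip bar alpha q x f) d.1 *
   (conjc a.1 * \sum_(c <- P_word bar alpha q d.2) c.1 * ip_word ip a.2 c.2)); last first.
  by apply: eq_bigr => d _; rewrite !big_distrr; apply: eq_bigr => c _ /=; ring.
rewrite (big_b_formula ip bar alpha q x (fun w => conjc a.1 * \sum_(c <- P_word bar alpha q w) c.1 * ip_word ip a.2 c.2)).
apply: eq_bigr => a' _; rewrite (adjoint_on_simple_tensors bar_invol bar_sadj) !big_distrr.
by apply: eq_bigr => d _ /=; ring.
Qed.
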